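(* Let $c>0$ and let $\Phi:[0,\infty)\to\mathbb{R}$ be the Gneiting function $$\Phi(r)=\left(1-\frac{r}{c}\right)_+^{5}\left(1+5\frac{r}{c}-27\left(\frac{r}{c}\right)^2\right).$$ Let $\mathbf{p}\in\mathbb{R}^2$, $\Delta_x,\Delta_y\in\mathbb{R}$, and define $\mathbf{H}=(H_1,H_2):\mathbb{R}^2\to\mathbb{R}^2$ by $$H_1(x,y)=x+\Delta_x\,\Phi(\|(x,y)-\mathbf{p}\|),\qquad H_2(x,y)=y+\Delta_y\,\Phi(\|(x,y)-\mathbf{p}\|),$$ where $\|\cdot\|$ is the Euclidean norm. Let $\Delta=\max(|\Delta_x|,|\Delta_y|)$. If $c>4.43\sqrt{2}\,\Delta$ (approximately $c>6.26\,\Delta$), then the Jacobian determinant $$\det J(x,y)=1+\Delta_x\frac{\partial}{\partial x}\Phi(\|(x,y)-\mathbf{p}\|)+\Delta_y\frac{\partial}{\partial y}\Phi(\|(x,y)-\mathbf{p}\|)$$ is strictly positive at every point $(x,y)\in\mathbb{R}^2$.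
   Context: $(t)_+=\max(t,0)$ denotes the truncated power function. The map $\mathbf{H}$ is the one-landmark transformation shifting the source landmark $\mathbf{p}$ to the target landmark $\mathbf{p}+(\Delta_x,\Delta_y)$; positivity of the Jacobian determinant everywhere is the criterion used for topology preservation. *)

From Stdlib Require Import Reals Lra.
From Coquelicot Require Import Coquelicot.
Open Scope R_scope.

Definition tpos (t : R) : R := Rmax t 0.

Definition gneiting (c r : R) : R :=
  (tpos (1 - r / c)) ^ 5 * (1 + 5 * (r / c) - 27 * (r / c) ^ 2).

Definition dist2 (px py x y : R) : R :=
  sqrt ((x - px) ^ 2 + (y - py) ^ 2).

Definition bump (c px py x y : R) : R := gneiting c (dist2 px py x y).

Definition H1 (c px py dx dy x y : R) : R := x + dx * bump c px py x y.
Definition H2 (c px py dx dy x y : R) : R := y + dy * bump c px py x y.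

Definition jacdet (c px py dx dy x y : R) : R :=
  1 + dx * Derive (fun t => bump c px py t y) x
    + dy * Derive (fun t => bump c px py x t) y.

(** Write [r = ||(x,y) - p||] and [s = r/c].  The Gneiting function is [C^1]
    with [Phi'(r) = r * G(r)], where [G(r) = 21/c^2 (1-s)_+^4 (9s - 4)], so the
    partial derivatives of [Phi(||.-p||)] are [(x - px) G(r)] and [(y - py) G(r)]
    (also at [p], where both vanish).  Hence [det J = 1 + G(r) (dx (x-px) + dy (y-py))]
    and, by Cauchy-Schwarz in the form [|a| + |b| <= sqrt 2 sqrt (a^2 + b^2)],
    [|det J - 1| <= sqrt 2 Delta r |G(r)| = sqrt 2 Delta / c * |21 s (1-s)^4 (9s-4)|].
    The polynomial [21 s (1-s)^4 (9s-4)] has absolute value at most [4.43] on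
    [[0,1]], so [det J > 0] as soon as [c > 4.43 sqrt 2 Delta]. *)

From Stdlib Require Import Reals Lra Psatz.
From Coquelicot Require Import Coquelicot.
Open Scope R_scope.

Lemma is_derive_glue (f g h : R -> R) x0 l :
  (forall t, t <= x0 -> f t = g t) -> (forall t, x0 <= t -> f t = h t) ->
  is_derive g x0 l -> is_derive h x0 l -> is_derive f x0 l.
Proof.
intros Hfg Hfh Hg Hh.
apply is_derive_Reals in Hg. apply is_derive_Reals in Hh. apply is_derive_Reals.
intros eps Heps.
destruct (Hg eps Heps) as [d1 Hd1]. destruct (Hh eps Heps) as [d2 Hd2].
assert (Hd : 0 < Rmin d1 d2) by (apply Rmin_pos; [apply d1 | apply d2]).
exists (mkposreal _ Hd); simpl; intros k Hk0 Hk.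
assert (Hk1 : Rabs k < d1) by (eapply Rlt_le_trans; [exact Hk | apply Rmin_l]).
assert (Hk2 : Rabs k < d2) by (eapply Rlt_le_trans; [exact Hk | apply Rmin_r]).
destruct (Rle_dec k 0).
- rewrite (Hfg (x0 + k)), (Hfg x0) by lra. now apply Hd1.
- rewrite (Hfh (x0 + k)), (Hfh x0) by lra. now apply Hd2.
Qed.

Lemma is_derive_radial (f g : R -> R) p b t0 :
  (forall r, 0 <= r -> is_derive f r (r * g r)) ->
  is_derive (fun t => f (sqrt ((t - p) ^ 2 + b ^ 2))) t0
    ((t0 - p) * g (sqrt ((t0 - p) ^ 2 + b ^ 2))).
Proof.
intros Hf.
destruct (Req_dec ((t0 - p) ^ 2 + b ^ 2) 0) as [Hr0 | Hr0].
- assert (t0 = p) as -> by nra. assert (b = 0) as -> by nra.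
  rewrite Rminus_diag, Rmult_0_l.
  assert (Hf0 : is_derive f (p - p) (0 * g 0)) by (rewrite Rminus_diag; now apply Hf, Rle_refl).
  apply is_derive_glue with (fun t => f (p - t)) (fun t => f (t - p)).
  + intros t Ht. f_equal. replace ((t - p) ^ 2 + 0 ^ 2) with ((p - t) ^ 2) by ring.
    apply sqrt_pow2; lra.
  + intros t Ht. f_equal. replace ((t - p) ^ 2 + 0 ^ 2) with ((t - p) ^ 2) by ring.
    apply sqrt_pow2; lra.
  + replace 0 with (-1 * (0 * g 0)) at 1 by ring.
    apply (is_derive_comp f (fun t => p - t)); [exact Hf0 |].
    auto_derive; [easy | ring].
  + replace 0 with (1 * (0 * g 0)) at 1 by ring.
    apply (is_derive_comp f (fun t => t - p)); [exact Hf0 |].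
    auto_derive; [easy | ring].
- assert (Hpos : 0 < (t0 - p) ^ 2 + b ^ 2)
    by (pose proof (pow2_ge_0 (t0 - p)); pose proof (pow2_ge_0 b); lra).
  assert (Hr : 0 < sqrt ((t0 - p) ^ 2 + b ^ 2)) by now apply sqrt_lt_R0.
  set (r := sqrt ((t0 - p) ^ 2 + b ^ 2)) in *.
  replace ((t0 - p) * g r) with ((t0 - p) / r * (r * g r)) by (field; lra).
  apply (is_derive_comp f); [apply Hf; lra |].
  auto_derive; replace ((t0 + - p) * ((t0 + - p) * 1) + b * (b * 1))
    with ((t0 - p) ^ 2 + b ^ 2) by ring; [lra | fold r; field; lra].
Qed.

Definition gneiting_profile (s : R) : R := 21 * s * (1 - s) ^ 4 * (9 * s - 4).

(* The maximum of [- gneiting_profile] on [[0, 4/9]] is about [4.4264], attained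
   near [s0 = 0.1289]; the certificate expands around [s0] with a quartic [q > 0]. *)
Lemma gneiting_profile_ge s : 0 <= s <= 4 / 9 -> - (443 / 100) <= gneiting_profile s.
Proof.
intros Hs. unfold gneiting_profile.
set (s0 := 1289 / 10000).
set (q := 533019687610640349 / 2000000000000000 - 230321300892459 / 250000000000 * s
   + 126286882407 / 100000000 * s ^ 2 - 3956379 / 5000 * s ^ 3 + 189 * s ^ 4).
assert (Hcert : 443 / 100 + 21 * s * (1 - s) ^ 4 * (9 * s - 4) = (s - s0) ^ 2 * q +
   (376595621481236689171 / 200000000000000000000000
    + 679243010855789583 / 50000000000000000000 * s)).
{ unfold q, s0. field. }
assert (Hq : 0 <= q) by (unfold q; nra).
assert (0 <= (s - s0) ^ 2 * q) by (apply Rmult_le_pos; [apply pow2_ge_0 | exact Hq]).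
lra.
Qed.

Lemma gneiting_profile_le s : 4 / 9 <= s <= 1 -> gneiting_profile s <= 443 / 100.
Proof.
intros Hs. unfold gneiting_profile.
assert (H3 : 0 <= (1 - s) ^ 3 <= (5 / 9) ^ 3) by (split; [apply pow_le | apply pow_incr]; lra).
assert (H1 : 0 <= (1 - s) * (9 * s - 4) <= 7 / 10).
{ split; [apply Rmult_le_pos; lra |].
  pose proof (pow2_ge_0 (s - 13 / 18)). nra. }
assert (0 <= (1 - s) ^ 3 * ((1 - s) * (9 * s - 4)) <= (5 / 9) ^ 3 * (7 / 10))
  by (split; [apply Rmult_le_pos | apply Rmult_le_compat]; lra).
replace (21 * s * (1 - s) ^ 4 * (9 * s - 4))
  with (21 * s * ((1 - s) ^ 3 * ((1 - s) * (9 * s - 4)))) by ring.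
nra.
Qed.

Lemma Rabs_gneiting_profile_le s : 0 <= s <= 1 -> Rabs (gneiting_profile s) <= 443 / 100.
Proof.
intros Hs. apply Rabs_le.
assert (Hw : 0 <= 21 * s * (1 - s) ^ 4)
  by (apply Rmult_le_pos; [lra | apply pow_le; lra]).
destruct (Rle_dec s (4 / 9)).
- split; [apply gneiting_profile_ge; lra |].
  unfold gneiting_profile. nra.
- split; [| apply gneiting_profile_le; lra].
  unfold gneiting_profile. nra.
Qed.

Lemma Rabs_add_le_sqrt2 a b : Rabs a + Rabs b <= sqrt 2 * sqrt (a ^ 2 + b ^ 2).
Proof.
rewrite <- sqrt_mult_alt by lra.
rewrite <- (sqrt_pow2 (Rabs a + Rabs b))
  by (pose proof (Rabs_pos a); pose proof (Rabs_pos b); lra).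
apply sqrt_le_1_alt.
rewrite <- (pow2_abs a), <- (pow2_abs b).
pose proof (pow2_ge_0 (Rabs a - Rabs b)). nra.
Qed.

Lemma Rabs_dot_le dx dy a b :
  Rabs (dx * a + dy * b) <= sqrt 2 * Rmax (Rabs dx) (Rabs dy) * sqrt (a ^ 2 + b ^ 2).
Proof.
set (D := Rmax (Rabs dx) (Rabs dy)).
assert (Hx : Rabs dx * Rabs a <= D * Rabs a)
  by (apply Rmult_le_compat_r; [apply Rabs_pos | apply Rmax_l]).
assert (Hy : Rabs dy * Rabs b <= D * Rabs b)
  by (apply Rmult_le_compat_r; [apply Rabs_pos | apply Rmax_r]).
assert (HD : 0 <= D) by (eapply Rle_trans; [apply Rabs_pos | apply Rmax_l]).
pose proof (Rabs_add_le_sqrt2 a b) as Hab.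
pose proof (Rabs_triang (dx * a) (dy * b)). rewrite !Rabs_mult in *.
nra.
Qed.

Lemma tpos_id t : 0 <= t -> tpos t = t.
Proof. apply Rmax_left. Qed.

Lemma tpos_eq0 t : t <= 0 -> tpos t = 0.
Proof. apply Rmax_right. Qed.

Section Gneiting.

Variable c : R.
Hypothesis c_gt0 : 0 < c.

Lemma one_sub_div_ge0 r : r <= c -> 0 <= 1 - r / c.
Proof.
intros Hr. replace (1 - r / c) with ((c - r) / c) by (field; lra).
apply Rdiv_le_0_compat; lra.
Qed.

Lemma one_sub_div_le0 r : c <= r -> 1 - r / c <= 0.
Proof.
intros Hr. replace (1 - r / c) with (- ((r - c) / c)) by (field; lra).
enough (0 <= (r - c) / c) by lra. apply Rdiv_le_0_compat; lra.
Qed.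

Definition gneiting_poly (r : R) : R :=
  (1 - r / c) ^ 5 * (1 + 5 * (r / c) - 27 * (r / c) ^ 2).

Definition gneiting_slope (r : R) : R :=
  21 / c ^ 2 * tpos (1 - r / c) ^ 4 * (9 * (r / c) - 4).

Lemma gneiting_le r : r <= c -> gneiting c r = gneiting_poly r.
Proof. intros Hr. unfold gneiting. now rewrite tpos_id by now apply one_sub_div_ge0. Qed.

Lemma gneiting_ge r : c <= r -> gneiting c r = 0.
Proof. intros Hr. unfold gneiting. rewrite tpos_eq0 by now apply one_sub_div_le0. ring. Qed.

Lemma gneiting_slope_ge r : c <= r -> gneiting_slope r = 0.
Proof. intros Hr. unfold gneiting_slope. rewrite tpos_eq0 by now apply one_sub_div_le0. ring. Qed.

Lemma is_derive_gneiting_poly r : r <= c ->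
  is_derive gneiting_poly r (r * gneiting_slope r).
Proof.
intros Hr. unfold gneiting_poly, gneiting_slope.
rewrite tpos_id by now apply one_sub_div_ge0.
auto_derive; [easy | field; lra].
Qed.

Lemma is_derive_gneiting r : is_derive (gneiting c) r (r * gneiting_slope r).
Proof.
destruct (Rtotal_order r c) as [Hlt | [-> | Hgt]].
- apply is_derive_ext_loc with gneiting_poly; [| now apply is_derive_gneiting_poly; lra].
  exists (mkposreal (c - r) ltac:(lra)); intros t Ht.
  apply Rabs_lt_between' in Ht; simpl in Ht.
  symmetry; apply gneiting_le; lra.
- apply is_derive_glue with gneiting_poly (fun _ => 0).
  + exact gneiting_le.
  + exact gneiting_ge.
  + now apply is_derive_gneiting_poly; lra.
  + rewrite gneiting_slope_ge by lra. auto_derive; [easy | ring].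
- apply is_derive_ext_loc with (fun _ => 0).
  + exists (mkposreal (r - c) ltac:(lra)); intros t Ht.
    apply Rabs_lt_between' in Ht; simpl in Ht.
    symmetry; apply gneiting_ge; lra.
  + rewrite gneiting_slope_ge by lra. auto_derive; [easy | ring].
Qed.

Lemma Rabs_gneiting_slope_le r :
  0 <= r -> r * Rabs (gneiting_slope r) <= 443 / 100 / c.
Proof.
intros Hr.
assert (Hb : 0 <= 443 / 100 / c) by (apply Rdiv_le_0_compat; lra).
destruct (Rle_dec c r).
- rewrite gneiting_slope_ge, Rabs_R0 by lra. lra.
- assert (E : r * gneiting_slope r = gneiting_profile (r / c) / c).
  { unfold gneiting_slope, gneiting_profile.
    rewrite tpos_id by (apply one_sub_div_ge0; lra). field. lra. }
  rewrite <- (Rabs_pos_eq r) at 1 by lra.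
  rewrite <- Rabs_mult, E, Rabs_div, (Rabs_pos_eq c) by lra.
  apply Rmult_le_compat_r; [apply Rlt_le, Rinv_0_lt_compat; lra |].
  apply Rabs_gneiting_profile_le. split.
  + apply Rdiv_le_0_compat; lra.
  + apply (Rdiv_le_1 r c); lra.
Qed.

Lemma one_add_dot_slope_gt0 dx dy a b :
  443 / 100 * sqrt 2 * Rmax (Rabs dx) (Rabs dy) < c ->
  0 < 1 + dx * (a * gneiting_slope (sqrt (a ^ 2 + b ^ 2)))
        + dy * (b * gneiting_slope (sqrt (a ^ 2 + b ^ 2))).
Proof.
intros Hc.
set (r := sqrt (a ^ 2 + b ^ 2)).
set (G := gneiting_slope r).
set (D := Rmax (Rabs dx) (Rabs dy)) in *.
assert (HD : 0 <= sqrt 2 * D)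
  by (apply Rmult_le_pos; [apply sqrt_pos | eapply Rle_trans; [apply Rabs_pos | apply Rmax_l]]).
assert (HrG : r * Rabs G <= 443 / 100 / c) by (apply Rabs_gneiting_slope_le, sqrt_pos).
assert (Hsmall : sqrt 2 * D * (443 / 100 / c) < 1).
{ apply (Rmult_lt_reg_r c); [exact c_gt0 |].
  replace (sqrt 2 * D * (443 / 100 / c) * c) with (443 / 100 * sqrt 2 * D) by (field; lra).
  lra. }
assert (HGE : Rabs (G * (dx * a + dy * b)) <= sqrt 2 * D * (r * Rabs G)).
{ rewrite Rabs_mult. pose proof (Rabs_dot_le dx dy a b) as Hdot. fold r D in Hdot.
  pose proof (Rabs_pos G). nra. }
assert (HrG' : sqrt 2 * D * (r * Rabs G) <= sqrt 2 * D * (443 / 100 / c))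
  by (apply Rmult_le_compat_l; lra).
pose proof (Rle_abs (- (G * (dx * a + dy * b)))). rewrite Rabs_Ropp in *.
replace (1 + dx * (a * G) + dy * (b * G)) with (1 + G * (dx * a + dy * b)) by ring.
lra.
Qed.

End Gneiting.

Lemma is_derive_bump_x c px py x y : 0 < c ->
  is_derive (fun t => bump c px py t y) x ((x - px) * gneiting_slope c (dist2 px py x y)).
Proof.
intros Hc. unfold bump, dist2.
apply (is_derive_radial (gneiting c)). intros r _. now apply is_derive_gneiting.
Qed.

Lemma is_derive_bump_y c px py x y : 0 < c ->
  is_derive (fun t => bump c px py x t) y ((y - py) * gneiting_slope c (dist2 px py x y)).
Proof.
intros Hc. unfold bump, dist2.
rewrite (Rplus_comm ((x - px) ^ 2)).
apply is_derive_ext with (fun t => gneiting c (sqrt ((t - py) ^ 2 + (x - px) ^ 2))).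
- intros t. now rewrite Rplus_comm.
- apply (is_derive_radial (gneiting c)). intros r _. now apply is_derive_gneiting.
Qed.

Theorem mainTheorem2 (c px py dx dy : R) :
  0 < c ->
  443 / 100 * sqrt 2 * Rmax (Rabs dx) (Rabs dy) < c ->
  forall x y : R,
    ex_derive (fun t => bump c px py t y) x /\
    ex_derive (fun t => bump c px py x t) y /\
    0 < jacdet c px py dx dy x y.
Proof.
intros Hc Hdelta x y.
pose proof (is_derive_bump_x c px py x y Hc) as Hx.
pose proof (is_derive_bump_y c px py x y Hc) as Hy.
split; [eexists; exact Hx |]. split; [eexists; exact Hy |].
unfold jacdet.
rewrite (is_derive_unique (fun t : R => bump c px py t y) x _ Hx),
  (is_derive_unique (fun t : R => bump c px py x t) y _ Hy).
now apply one_add_dot_slope_gt0.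
Qed.
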